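(* Let $\ell,k_1,k$ be positive integers. Consider RSA-PFDH with message space $\{0,1\}^\ell$, randomness length $k_1$ and hash function $h:\{0,1\}^{\ell+k_1}\to\{0,1\}^k$, in the chosen prefix second preimage tractable random oracle model $\mathrm{CP\text{-}SPT\text{-}ROM}_{(\ell,k_1,k)}$. There exists a PPT adversary $\mathcal{A}$ that, by making queries to the signing oracle and to $\mathcal{CP\text{-}SPO}^h$, breaks RSA-PFDH (outputs a valid EUF-CMA forgery) with probability at least $1-e^{(1-2^{\ell})/2^k}$. In particular, if $\ell\ge k\ge 2$, $\mathcal{A}$ outputs a valid forgery with probability at least $1-e^{-1/2}$.
   Context: Model $\mathrm{CP\text{-}SPT\text{-}ROM}_{(\ell,k_1,k)}$: let $M=\{0,1\}^{\ell}$, $R=\{0,1\}^{k_1}$, $X=M\times R$ (elements written as strings $m\|r$), $Y=\{0,1\}^k$, and $h:X\to Y$ a uniformly random function with table $\mathbb{T}_h$. All parties may query $\mathcal{RO}^h(x)$, returning $h(x)$, and the chosen prefix second preimage oracle $\mathcal{CP\text{-}SPO}^h(x,r')$: given $x$ with $|x|=\ell+k_1$ and $r'$ with $|r'|=k_1$, let $y=h(x)$; if there is an entry $(m'\|r',y)\in\mathbb{T}_h$ with $m'\|r'\ne x$, it returns such an $m'\|r'$ uniformly at random; otherwise it returns $\perp$. RSA-PFDH: $\mathsf{RSAGen}(1^k)$ chooses distinct random $k/2$-bit primes $p,q$, $N=pq$, $\phi=(p-1)(q-1)$, random $e\in\mathbb{Z}_\phi$ and $d$ with $ed\equiv1\pmod\phi$;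 $vk=(N,e)$, $sk=(N,d)$. $\mathsf{Sign}(sk,m)$: pick $r\in\{0,1\}^{k_1}$ uniformly, output $\sigma=(r,h(m\|r)^d\bmod N)$. $\mathsf{Verify}(vk,m,(r,x))=1$ iff $h(m\|r)=x^e\bmod N$. EUF-CMA game: the adversary receives $vk$, may query the signing oracle and the model's oracles, and outputs $(m^*,\sigma^* )$; it breaks the scheme if $\mathsf{Verify}(vk,m^*,\sigma^* )=1$ and $m^*$ was never queried to the signing oracle. *)

From HB Require Import structures.
From mathcomp Require Import all_boot all_order all_algebra.
From mathcomp Require Import reals sequences exp.
Set Implicit Arguments. Unset Strict Implicit. Unset Printing Implicit Defensive.
Import Order.TTheory GRing.Theory Num.Theory.

Definition bits (n : nat) := n.-tuple bool.

(* little-endian binary value of a bit string (a fixed injection into [0,2^n)) *)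
Definition bits2nat (n : nat) (b : bits n) : nat :=
  \sum_(i < n) (tnth b i : nat) * 2 ^ i.

(* The random oracle table: h : X -> Y with X = M x R (x = m||r). *)
Definition hfun (l k1 k : nat) := {ffun bits l * bits k1 -> bits k}.

Definition kbit_prime (b p : nat) : bool :=
  prime p && (2 ^ b.-1 <= p < 2 ^ b).

Definition rsa_key (k p q e d : nat) : Prop :=
  let phi := (p.-1 * q.-1)%N in
  [/\ kbit_prime k./2 p, kbit_prime k./2 q, p != q,
      (e < phi) && (d < phi) & e * d = 1 %[mod phi]].

Definition pfdh_verify l k1 k (h : hfun l k1 k) (N e : nat)
    (m : bits l) (r : bits k1) (x : nat) : bool :=
  bits2nat (h (m, r)) %% N == x ^ e %% N.

Definition pfdh_sigval l k1 k (h : hfun l k1 k) (N d : nat)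
    (m : bits l) (r : bits k1) : nat :=
  bits2nat (h (m, r)) ^ d %% N.

(* Adversaries: loop-free oracle programs over a register file.       *)
(* Every instruction is a polynomial-time primitive on values of      *)
(* polynomial size; programs of size bounded independently of the     *)
(* parameters are therefore PPT.             *)

Inductive val (l k1 k : nat) : Type :=
| VMsg of bits l
| VRnd of bits k1
| VInp of bits l * bits k1
| VHash of bits k
| VNum of nat
| VBool of bool.
Arguments VMsg {l k1 k}. Arguments VRnd {l k1 k}. Arguments VInp {l k1 k}.
Arguments VHash {l k1 k}. Arguments VNum {l k1 k}. Arguments VBool {l k1 k}.

Definition val_eq l k1 k (u v : option (val l k1 k)) : option bool :=
  match u, v with
  | Some (VMsg a), Some (VMsg b) => Some (a == b)
  | Some (VRnd a), Some (VRnd b) => Some (a == b)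
  | Some (VInp a), Some (VInp b) => Some (a == b)
  | Some (VHash a), Some (VHash b) => Some (a == b)
  | Some (VNum a), Some (VNum b) => Some (a == b)
  | Some (VBool a), Some (VBool b) => Some (a == b)
  | _, _ => None
  end.

(* Registers are numbered in order of creation; the initial registers
   are 0 = N and 1 = e (the verification key). *)
Inductive prog (l k1 k : nat) : Type :=
| PConst of val l k1 k & prog l k1 k
| PEq of nat & nat & prog l k1 k
| PPair of nat & nat & prog l k1 k
| PFst of nat & prog l k1 k
| PSnd of nat & prog l k1 k
| PCoin of prog l k1 k
| PIf of nat & prog l k1 k & prog l k1 k
| PRO of nat & prog l k1 k
| PSign of nat & prog l k1 k                  (* two new registers := r, sigma *)
| PSPO of nat & nat & prog l k1 k & prog l k1 k
    (* CP-SPO^h(ri, rj): on an answer m'||r' store it in a new register and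
       continue with the first program; on bottom continue with the second *)
| POut of nat & nat & nat.                    (* output (m_out, (r_out, x_out)) *)
Arguments POut {l k1 k}.

Fixpoint psize l k1 k (P : prog l k1 k) : nat :=
  match P with
  | PConst _ P' | PEq _ _ P' | PPair _ _ P' | PFst _ P' | PSnd _ P'
  | PCoin P' | PRO _ P' | PSign _ P' => (psize P').+1
  | PIf _ P1 P2 | PSPO _ _ P1 P2 => (psize P1 + psize P2).+1
  | POut _ _ _ => 1
  end.

Local Open Scope ring_scope.

Definition avg (R : realType) (T : finType) (f : T -> R) : R :=
  (\sum_(t : T) f t) / (#|T|%:R).

(* Probability that the adversary wins the EUF-CMA game, for a fixed
   hash table h, key (N,e,d), list of signed messages [log] and
   register file [env]; averaging over signing randomness, the
   uniform choices of CP-SPO and the adversary's coins. *)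
Fixpoint win (R : realType) l k1 k (N e d : nat) (h : hfun l k1 k)
    (log : seq (bits l)) (env : seq (val l k1 k)) (P : prog l k1 k)
    {struct P} : R :=
  match P with
  | PConst v P' => win R N e d h log (rcons env v) P'
  | PEq i j P' =>
      match val_eq (onth env i) (onth env j) with
      | Some b => win R N e d h log (rcons env (VBool b)) P'
      | None => 0
      end
  | PPair i j P' =>
      match onth env i, onth env j with
      | Some (VMsg m), Some (VRnd r) =>
          win R N e d h log (rcons env (VInp (m, r))) P'
      | _, _ => 0
      end
  | PFst i P' =>
      match onth env i with
      | Some (VInp x) => win R N e d h log (rcons env (VMsg x.1)) P'
      | _ => 0
      end
  | PSnd i P' =>
      match onth env i with
      | Some (VInp x) => win R N e d h log (rcons env (VRnd x.2)) P'
      | _ => 0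
      end
  | PCoin P' =>
      (win R N e d h log (rcons env (VBool true)) P'
       + win R N e d h log (rcons env (VBool false)) P') / 2
  | PIf i P1 P2 =>
      match onth env i with
      | Some (VBool b) =>
          if b then win R N e d h log env P1 else win R N e d h log env P2
      | _ => 0
      end
  | PRO i P' =>
      match onth env i with
      | Some (VInp x) => win R N e d h log (rcons env (VHash (h x))) P'
      | _ => 0
      end
  | PSign i P' =>
      match onth env i with
      | Some (VMsg m) =>
          avg (fun r : bits k1 =>
            win R N e d h (m :: log)
              (rcons (rcons env (VRnd r)) (VNum (pfdh_sigval h N d m r))) P')
      | _ => 0
      end
  | PSPO i j P1 P2 =>
      match onth env i, onth env j with
      | Some (VInp x), Some (VRnd r') =>
          let cands := [seq m' <- enum {: bits l} |
                          ((m', r') != x) && (h (m', r') == h x)] in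
          if cands is [::] then win R N e d h log env P2
          else (\sum_(m' <- cands)
                  win R N e d h log (rcons env (VInp (m', r'))) P1)
               / (size cands)%:R
      | _, _ => 0
      end
  | POut i j t =>
      match onth env i, onth env j, onth env t with
      | Some (VMsg m), Some (VRnd r), Some (VNum x) =>
          if (m \notin log) && pfdh_verify h N e m r x then 1 else 0
      | _, _, _ => 0
      end
  end.

Definition forge_prob (R : realType) l k1 k (A : prog l k1 k)
    (p q e d : nat) : R :=
  let N := (p * q)%N in
  avg (fun h : hfun l k1 k => win R N e d h [::] [:: VNum N; VNum e] A).

(* The adversary signs a fixed message m0, obtaining (r, s) with s = h(m0||r)^d,
   and asks CP-SPO^h for a second preimage of h(m0||r) sharing the suffix r.
   Any answer m'||r yields the forgery (m', (r, s)), valid because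
   h(m'||r) = h(m0||r).  So the adversary wins exactly when h(m0||r) collides
   with one of the 2^l - 1 other values h(m'||r) of its row; these values of a
   uniform h are independent, so this happens with probability
   1 - (1 - 2^-k)^(2^l - 1) >= 1 - exp(-(2^l - 1)/2^k). *)

From HB Require Import structures.
From mathcomp Require Import all_boot all_order all_algebra.
From mathcomp Require Import reals sequences exp zify lra.
Set Implicit Arguments. Unset Strict Implicit. Unset Printing Implicit Defensive.
Import Order.TTheory GRing.Theory Num.Theory.

Lemma fermat_little_iter p y t : prime p -> y ^ (1 + t * p.-1) = y %[mod p].
Proof.
move=> p_pr; elim: t => [|t IHt]; first by rewrite addn0 expn1.
have -> : (1 + t.+1 * p.-1 = (1 + t * p.-1) + p.-1)%N by rewrite mulSnr addnA.
by rewrite expnD -modnMml IHt modnMml -expnS prednK ?prime_gt0 ?fermat_little.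
Qed.

Lemma rsa_exp_cancel p q e d y :
    prime p -> prime q -> p != q -> e * d = 1 %[mod p.-1 * q.-1] ->
  (y ^ d %% (p * q)) ^ e = y %[mod p * q].
Proof.
move=> p_pr q_pr neq_pq ed1.
have [p_gt1 q_gt1] := (prime_gt1 p_pr, prime_gt1 q_pr).
have phi_gt1 : (1 < p.-1 * q.-1)%N by move/eqP: neq_pq; nia.
have [t ed_eq] : exists t, (e * d = 1 + t * (p.-1 * q.-1))%N.
  exists (e * d %/ (p.-1 * q.-1)).
  by rewrite {1}(divn_eq (e * d) (p.-1 * q.-1)) ed1 modn_small // addnC.
rewrite modnXm -expnM mulnC ed_eq; apply/eqP.
rewrite chinese_remainder ?prime_coprime ?dvdn_prime2 //.
by rewrite mulnA fermat_little_iter // mulnAC fermat_little_iter ?eqxx.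
Qed.

Lemma rsa_key_exp_cancel k p q e d : rsa_key k p q e d ->
  forall y, (y ^ d %% (p * q)) ^ e = y %[mod p * q].
Proof.
by case=> /andP[p_pr _] /andP[q_pr _] neq_pq _ ed1 y; apply: rsa_exp_cancel.
Qed.

Local Open Scope ring_scope.

Section Average.
Variable R : realType.

Lemma eq_avg (T : finType) (f g : T -> R) : f =1 g -> avg f = avg g.
Proof. by move=> eq_fg; rewrite /avg (eq_bigr _ (fun t _ => eq_fg t)). Qed.

Lemma avg_cst (T : finType) (c : R) : (0 < #|T|)%N -> avg (fun _ : T => c) = c.
Proof.
move=> T_gt0; rewrite /avg sumr_const -[c *+ _]mulr_natr mulfK //.
by rewrite pnatr_eq0 -lt0n.
Qed.

Lemma avgB (T : finType) (f g : T -> R) :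
  avg (fun t => f t - g t) = avg f - avg g.
Proof. by rewrite /avg sumrB mulrBl. Qed.

Lemma avgC (S T : finType) (f : S -> T -> R) :
  avg (fun s => avg (f s)) = avg (fun t => avg (f^~ t)).
Proof. by rewrite /avg -!mulr_suml exchange_big /= mulrAC. Qed.

Lemma avg_pred (T : finType) (P : pred T) :
  avg (fun t => (P t)%:R : R) = #|P|%:R / #|T|%:R.
Proof.
rewrite /avg -sum1_card natr_sum [in RHS]big_mkcond /=; congr (_ / _).
by apply: eq_bigr => t _; rewrite unfold_in; case: (P t).
Qed.

Lemma avg_ffun_prod (I J : finType) (F : I -> J -> R) :
  avg (fun f : {ffun I -> J} => \prod_i F i (f i)) = \prod_i avg (F i).
Proof.
by rewrite /avg -bigA_distr_bigA prodf_div prodr_const card_ffun natrX.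
Qed.

Lemma avg_sum (I T : finType) (f : I -> T -> R) :
  avg (fun t => \sum_i f i t) = \sum_i avg (f i).
Proof. by rewrite /avg exchange_big mulr_suml. Qed.

End Average.

Lemma prodr_natb (R : comPzSemiRingType) (T : finType) (P : pred T) :
  \prod_t (P t)%:R = [forall t, P t]%:R :> R.
Proof.
case: (boolP [forall t, P t]) => [/forallP Pall | /forallPn[t /negbTE nPt]].
  by rewrite big1 // => t _; rewrite Pall.
by rewrite (bigD1 t) //= nPt mul0r.
Qed.


Section RowCollision.
Variables (R : realType) (A B Y : finType).
Hypothesis Y_gt0 : (0 < #|Y|)%N.
Implicit Types (h : {ffun A * B -> Y}) (x : A * B) (y : Y).

Let Q : R := #|Y|%:R.

Definition row_collision h (x0 : A * B) : bool :=
  [exists a, ((a, x0.2) != x0) && (h (a, x0.2) == h x0)].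

Definition row_avoiding (x0 : A * B) y x : pred Y :=
  if x == x0 then pred1 y else if x.2 == x0.2 then predC1 y else predT.

Lemma row_collisionN_avoiding h (x0 : A * B) :
  ~~ row_collision h x0 = [forall x, h x \in row_avoiding x0 (h x0) x].
Proof.
rewrite negb_exists; apply/forallP/forallP => [noColl [a b] | avoid a].
  rewrite /row_avoiding; case: ifP => [/eqP -> | neq_x0]; first by rewrite inE.
  case: ifP => //= /eqP b_eq; rewrite b_eq in neq_x0.
  by move: (noColl a); rewrite neq_x0 -b_eq.
have := avoid (a, x0.2); rewrite /row_avoiding /= eqxx negb_and negbK.
by case: eqP => [->|_ /=]; rewrite ?eqxx.
Qed.

(* Splitting on the value y of h x0 turns the absence of a row collision into
   a disjoint union of product events over the coordinates of h. *)
Lemma row_collisionN_sum h (x0 : A * B) :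
  (~~ row_collision h x0)%:R =
  \sum_y \prod_x (h x \in row_avoiding x0 y x)%:R :> R.
Proof.
under eq_bigr do rewrite prodr_natb.
rewrite (bigD1 (h x0)) //= big1 ?addr0 -?row_collisionN_avoiding // => y ne_y.
apply/eqP; rewrite pnatr_eq0 eqb0; apply/forallPn; exists x0.
by rewrite /row_avoiding eqxx inE eq_sym.
Qed.

Lemma card_rowD1 (x0 : A * B) :
  #|[pred x : A * B | (x != x0) && (x.2 == x0.2)]| = #|A|.-1.
Proof.
have card_row : #|[pred x : A * B | x.2 == x0.2]| = #|A|.
  rewrite -[RHS]muln1 -(card1 x0.2) -cardX; apply: eq_card => -[a b] /=.
  by rewrite !inE.
rewrite -card_row [in RHS](cardD1 x0) inE eqxx /= add0n.
by apply: eq_card => x; rewrite !inE andbC.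
Qed.

Lemma avg_row_avoiding (x0 : A * B) y x :
  avg (fun z => (z \in row_avoiding x0 y x)%:R) =
  if x == x0 then Q^-1 else if x.2 == x0.2 then 1 - Q^-1 else 1.
Proof.
have Q_neq0 : Q != 0 by rewrite pnatr_eq0 -lt0n.
rewrite avg_pred /row_avoiding -/Q.
case: eqP => _; first by rewrite card1 mul1r.
case: eqP => _; last by rewrite cardT /= -cardE mulfV.
by rewrite cardC1 -subn1 natrB // mulrBl mulfV // mul1r.
Qed.

Lemma prod_avg_row_avoiding (x0 : A * B) y :
  \prod_x avg (fun z => (z \in row_avoiding x0 y x)%:R) =
  Q^-1 * (1 - Q^-1) ^+ #|A|.-1.
Proof.
under eq_bigr do rewrite avg_row_avoiding.
rewrite (bigD1 x0) //= eqxx -(card_rowD1 x0) -prodr_const; congr (_ * _).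
rewrite [LHS]big_mkcond [RHS]big_mkcond; apply: eq_bigr => x _.
by rewrite unfold_in /=; case: (x == x0); case: (x.2 == x0.2).
Qed.

Lemma avg_row_collision (x0 : A * B) :
  avg (fun h => (row_collision h x0)%:R) = 1 - (1 - Q^-1) ^+ #|A|.-1.
Proof.
have Q_neq0 : Q != 0 by rewrite pnatr_eq0 -lt0n.
have noColl : avg (fun h => (~~ row_collision h x0)%:R) = (1 - Q^-1) ^+ #|A|.-1.
  rewrite (eq_avg (row_collisionN_sum^~ x0)) avg_sum.
  under eq_bigr => y _ do
    rewrite (avg_ffun_prod (fun x z => (z \in row_avoiding x0 y x)%:R)).
  under eq_bigr do rewrite prod_avg_row_avoiding.
  by rewrite sumr_const -mulr_natl mulrA (mulfV Q_neq0) mul1r.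
have ffun_gt0 : (0 < #|{ffun A * B -> Y}|)%N.
  by rewrite card_ffun expn_gt0 Y_gt0.
rewrite -noColl -[X in X - _](avg_cst 1 ffun_gt0) -avgB; apply: eq_avg => h.
by case: row_collision; rewrite ?subr0 ?subrr.
Qed.
End RowCollision.

Definition msg0 l : bits l := nseq_tuple l false.

(* Registers: 0 = N, 1 = e, 2 = m0, 3 = r, 4 = s, 5 = m0||r, 6 = m'||r,
   7 = m'.  If CP-SPO answers bottom, the already signed m0 is output, which
   loses. *)
Definition forge_adv l k1 k : prog l k1 k :=
  PConst (VMsg (msg0 l)) (PSign 2
  (PPair 2 3 (PSPO 5 3 (PFst 6 (POut 7 3 4)) (POut 2 3 4)))).

Lemma win_forge_adv (R : realType) l k1 k (h : hfun l k1 k) N e d :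
    (forall y, (y ^ d %% N) ^ e = y %[mod N]) ->
  win R N e d h [::] [:: VNum N; VNum e] (forge_adv l k1 k) =
  avg (fun r => (row_collision h (msg0 l, r))%:R).
Proof.
move=> exp_cancel; apply: eq_avg => r /=.
set m := msg0 l; set cands := [seq _ <- _ | _].
have cands_coll : (cands != [::]) = row_collision h (m, r).
  by rewrite -has_filter; apply/hasP/existsP => [[a _]|[a]]; exists a;
    rewrite ?mem_enum.
have cands_forge m' : m' \in cands ->
    (m' \notin [:: m]) && pfdh_verify h N e m' r (pfdh_sigval h N d m r).
  rewrite mem_filter xpair_eqE eqxx andbT => /andP[/andP[neq_m /eqP coll] _].
  by rewrite inE neq_m /pfdh_verify /pfdh_sigval coll; apply/eqP/esym.
move: cands_coll cands_forge; case: cands => [<- _ | m' s <- forges] /=.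
  by rewrite inE eqxx.
rewrite big_seq (eq_bigr (fun _ => 1)) => [|m'' /forges -> //].
rewrite -big_seq (big_nth m') big_mkord sumr_const card_ord /=.
by rewrite mulfV ?pnatr_eq0.
Qed.

Lemma forge_prob_forge_adv (R : realType) l k1 k p q e d :
    rsa_key k p q e d ->
  forge_prob R (forge_adv l k1 k) p q e d = 1 - (1 - (2 ^+ k)^-1) ^+ (2 ^ l).-1.
Proof.
move=> key; have bits_gt0 n : (0 < #|{: bits n}|)%N.
  by rewrite card_tuple card_bool expn_gt0.
rewrite /forge_prob.
rewrite (eq_avg (fun h => win_forge_adv R h (rsa_key_exp_cancel key))).
rewrite avgC (eq_avg (fun r => avg_row_collision R (bits_gt0 k) (msg0 l, r))).
by rewrite avg_cst // !card_tuple card_bool natrX.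
Qed.

Lemma expr1B_le_expR (R : realType) (x : R) n :
  x <= 1 -> (1 - x) ^+ n <= expR (- (n%:R * x)).
Proof.
move=> x_le1; rewrite -mulrN expRM_natl; apply: lerXn2r.
- by rewrite nnegrE subr_ge0.
- by rewrite nnegrE expR_ge0.
- exact: expR_ge1Dx.
Qed.

Lemma sub1_exp2_div_le_Nhalf (R : realFieldType) (k l : nat) :
  (2 <= k <= l)%N -> (1 - 2 ^+ l) / 2 ^+ k <= - (1 / 2) :> R.
Proof.
case/andP=> k_ge2 k_le_l.
have ge4 : 4 <= 2 ^+ k :> R.
  apply: le_trans (_ : 2 ^+ 2 <= _); first by rewrite expr2 -natrM.
  by rewrite ler_eXn2l // ltr1n.
have le_l : 2 ^+ k <= 2 ^+ l :> R by rewrite ler_eXn2l // ltr1n.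
rewrite ler_pdivrMr ?exprn_gt0 //; lra.
Qed.

Theorem theorem3 :
  exists (A : forall l k1 k : nat, prog l k1 k) (c : nat),
    (forall l k1 k : nat, (psize (A l k1 k) <= c)%N) /\
    forall (R : realType) (l k1 k p q e d : nat),
      (0 < l)%N -> (0 < k1)%N -> (0 < k)%N ->
      rsa_key k p q e d ->
      1 - expR ((1 - 2 ^+ l) / 2 ^+ k) <= forge_prob R (A l k1 k) p q e d /\
      ((k <= l)%N -> (2 <= k)%N ->
         1 - expR (- (1 / 2)) <= forge_prob R (A l k1 k) p q e d).
Proof.
exists forge_adv, 7%N; split=> // R l k1 k p q e d _ _ _ key.
have bound :
    1 - expR ((1 - 2 ^+ l) / 2 ^+ k) <= forge_prob R (forge_adv l k1 k) p q e d.
  rewrite forge_prob_forge_adv // lerD2l lerN2.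
  have -> : (1 - 2 ^+ l) / 2 ^+ k = - ((2 ^ l).-1%:R * (2 ^+ k)^-1) :> R.
    by rewrite -subn1 natrB ?expn_gt0 // natrX -mulNr opprB.
  by apply: expr1B_le_expR; rewrite invf_le1 ?exprn_gt0 ?exprn_ege1 ?ler1n.
split=> // k_le_l k_ge2; apply: le_trans bound; rewrite lerD2l lerN2 ler_expR.
by apply: sub1_exp2_div_le_Nhalf; rewrite k_ge2.
Qed.
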